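(* If an $n$-Brinkhuis $(k_0,k_1,k_2)$-triple exists, then $s\ge k^{1/(n-1)}$, where $k=\min(k_0,k_1,k_2)$.
   Context: Let $\Sigma=\{0,1,2\}$. A word over $\Sigma$ is square-free if it cannot be written as $xyyz$ with $y$ nonempty. $\mathcal{A}(n)$ is the set of square-free words of length $n$, $a(n)=|\mathcal{A}(n)|$, and $s=\lim_{n\to\infty}a(n)^{1/n}$ (this limit exists). An $n$-Brinkhuis $(k_0,k_1,k_2)$-triple, where $k_0,k_1,k_2\ge1$, consists of three sets $\mathcal{B}^{(i)}=\{w^{(i)}_j: 1\le j\le k_i\}\subset\mathcal{A}(n)$ for $i\in\{0,1,2\}$. Each $\mathcal{B}^{(i)}$ has $k_i$ distinct square-free words of length $n$. The defining condition: for every square-free word $ii'i''\in\mathcal{A}(3)$ and all $1\le j\le k_i$, $1\le j'\le k_{i'}$, $1\le j''\le k_{i''}$, the concatenation $w^{(i)}_jw^{(i')}_{j'}w^{(i'')}_{j''}$ is square-free. *)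

From mathcomp Require Import all_boot.
From mathcomp Require Import boolp.
From Stdlib Require Import Reals.
From Coquelicot Require Import Coquelicot.

Set Implicit Arguments.
Unset Strict Implicit.
Unset Printing Implicit Defensive.

Notation letter := 'I_3.

Definition squarefree (w : seq letter) : Prop :=
  forall x y z : seq letter, w = x ++ y ++ y ++ z -> y = [::].

Definition A (n : nat) : {set n.-tuple letter} :=
  [set w : n.-tuple letter | `[< squarefree w >]].

Definition a (n : nat) : nat := #|A n|.

Definition brinkhuis_triple (n : nat) (k : letter -> nat)
    (B : letter -> {set n.-tuple letter}) : Prop :=
  (forall i, B i \subset A n) /\
  (forall i, #|B i| = k i) /\
  (forall i i' i'' : letter, squarefree [:: i; i'; i''] ->
     forall u v w : n.-tuple letter,
       u \in B i -> v \in B i' -> w \in B i'' ->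
       squarefree (tval u ++ tval v ++ tval w)).

(* Brinkhuis' construction: replacing every letter c of a square-free word of
   length m by an arbitrary word of B c yields a square-free word of length m n.
   A square in the image either fits into three consecutive blocks, which the
   triple condition forbids; or its length is a multiple of n, and then it comes
   from a square of the original word or produces a short square in three
   blocks; or some block reappears at a position not aligned with the block
   structure, which the triple condition forbids as well.  Distinct choices give
   distinct words, so a(m n) >= a(m) k^m.  Along m = n^j the m-th roots of a(m)
   then satisfy s^n >= s k in the limit, i.e. s >= k^(1/(n-1)). *)

From mathcomp Require Import all_boot.
From Stdlib Require Import Reals.
From Coquelicot Require Import Coquelicot.
From mathcomp Require Import boolp zify.
From Stdlib Require Import Lra.

Local Open Scope nat_scope.

Definition square_at (s : seq letter) (st L : nat) : Prop :=
  [/\ 0 < L, st + L + L <= size s &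
      forall i, i < L -> nth ord0 s (st + i) = nth ord0 s (st + L + i)].

Lemma squarefreeP s : squarefree s <-> forall st L, ~ square_at s st L.
Proof.
split=> [sf st L [L_gt0 Lle eqL] | nosq x y z def_s].
  pose y := take L (drop st s); pose y' := take L (drop (st + L) s).
  have def_s : s = take st s ++ y ++ y' ++ drop (st + L + L) s.
    rewrite -[LHS](cat_take_drop st) -[drop st s](cat_take_drop L); congr (_ ++ _ ++ _).
    by rewrite drop_drop -[drop (L + st) s](cat_take_drop L) drop_drop addnC (addnC L).
  have yy' : y = y'.
    apply: (@eq_from_nth _ ord0) => [|i].
      by rewrite !size_take !size_drop; do 2 case: ifP; lia.
    rewrite size_take size_drop => lt_i.
    by rewrite !nth_take ?nth_drop ?eqL //; move: lt_i; case: ifP; lia.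
  have y_nil : y = [::] by apply: (sf (take st s) _ (drop (st + L + L) s)); rewrite {1}def_s yy'.
  by move: (congr1 size y_nil); rewrite size_take size_drop /=; case: ifP; lia.
case: y def_s => [//|c y] def_s; exfalso.
apply: (nosq (size x) (size (c :: y))); split=> //; first by rewrite def_s !size_cat; lia.
move=> i lt_i; rewrite def_s !nth_cat -addnA !(ltnNge (size x + _)) !leq_addr /= !addKn.
by rewrite lt_i ltnNge leq_addr.
Qed.

Lemma squarefree3 (c0 c1 c2 : letter) :
  c0 != c1 -> c1 != c2 -> squarefree [:: c0; c1; c2].
Proof.
move=> c01 c12; apply/squarefreeP => st L [L_gt0 /= Lle eqL].
have L1 : L = 1 by lia.
subst L; move: (eqL 0 isT) Lle; rewrite !addn0.
case: st {eqL} => [|[|st]] /= e Lle; [move: c01 | move: c12 | lia].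
all: by rewrite e eqxx.
Qed.

Lemma exists_other_letter (c : letter) : exists c' : letter, c' != c.
Proof.
case: c => [[|i] lt_i]; last by exists ord0.
by exists (inord 1); apply/eqP => /(congr1 val) /=; rewrite inordK.
Qed.

Lemma size_flatten_uniform {T : Type} {n : nat} {bs : seq (seq T)} :
  all (fun b => size b == n) bs -> size (flatten bs) = size bs * n.
Proof. by elim: bs => [|b bs IH] //= /andP[/eqP sz_b /IH]; rewrite size_cat sz_b => ->. Qed.

Lemma nth_flatten_uniform {T : Type} (x0 : T) {n : nat} (bs : seq (seq T)) t x :
  all (fun b => size b == n) bs -> x < n ->
  nth x0 (flatten bs) (t * n + x) = nth x0 (nth [::] bs t) x.
Proof.
elim: bs t => [|b bs IH] t /=; first by rewrite !nth_nil.
move=> /andP[/eqP sz_b all_bs] lt_x; rewrite nth_cat sz_b.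
case: t => [|t] /=; first by rewrite add0n lt_x.
by rewrite mulSn -addnA ltnNge leq_addr /= addKn IH.
Qed.

Ltac simpl_ifs_lia := repeat match goal with |- context [if ?b then _ else _] =>
  (have -> : b = true by lia) || (have -> : b = false by lia) end.

Section BrinkhuisCode.
Variable n : nat.
Hypothesis n_gt0 : 0 < n.
Variable B : letter -> seq letter -> Prop.
Hypothesis size_B : forall i u, B i u -> size u = n.
Hypothesis B_nonempty : forall i, exists u, B i u.
Hypothesis B_triple : forall i i' i'' u v w, i != i' -> i' != i'' ->
  B i u -> B i' v -> B i'' w -> squarefree (u ++ v ++ w).
Arguments size_B {i u}.
Arguments B_triple {i i' i'' u v w}.

Lemma B_disjoint {i i' u} : B i u -> B i' u -> i = i'.
Proof.
move=> Bu B'u; apply/eqP/negP => /negP neq_ii'.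
have sz_u := size_B Bu; have neq_i'i : i' != i by rewrite eq_sym.
move: (B_triple neq_ii' neq_i'i Bu B'u Bu) => /squarefreeP/(_ 0 n); apply.
split=> //; first by rewrite !size_cat sz_u; lia.
by move=> x lt_x; rewrite !nth_cat sz_u; simpl_ifs_lia; congr nth; lia.
Qed.

Lemma B_other c : exists c' u, c != c' /\ B c' u.
Proof.
have [c' neq_c'] := exists_other_letter c; have [u Bu] := B_nonempty c'.
by exists c', u; rewrite eq_sym.
Qed.

(* If [z] occurs in [u ++ v] at offset [p], then [z] starts with the last [n - p]
   letters of [u] and ends with the first [p] letters of [v]: depending on whether
   [z] is coded by the letter of [u], either [t ++ z ++ v] or [u ++ z ++ t] has a
   square, for a suitable code word [t]. *)
Lemma B_unaligned {i i' e u v z} p : i != i' -> B i u -> B i' v -> B e z ->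
  0 < p < n -> (forall x, x < n -> nth ord0 z x = nth ord0 (u ++ v) (p + x)) ->
  False.
Proof.
move=> neq_ii' Bu Bv Bz /andP[p_gt0 lt_p] eq_z.
have sz_u := size_B Bu; have sz_v := size_B Bv; have sz_z := size_B Bz.
have [eq_ei|neq_ei] := eqVneq e i.
  subst e; have [c [t [neq_ic Bt]]] := B_other i; have sz_t := size_B Bt.
  have neq_ce : c != i by rewrite eq_sym.
  move: (B_triple neq_ce neq_ii' Bt Bz Bv) => /squarefreeP/(_ (n + (n - p)) p); apply.
  split=> //; first by rewrite !size_cat sz_t sz_z sz_v; lia.
  move=> x lt_x; rewrite !nth_cat sz_t sz_z; simpl_ifs_lia.
  by rewrite eq_z ?nth_cat ?sz_u; simpl_ifs_lia; [congr nth; lia | lia].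
have [c [t [neq_ec Bt]]] := B_other e; have sz_t := size_B Bt.
have neq_ie : i != e by rewrite eq_sym.
move: (B_triple neq_ie neq_ec Bu Bz Bt) => /squarefreeP/(_ p (n - p)); apply.
split; [lia | by rewrite !size_cat sz_t sz_z sz_u; lia |].
move=> x lt_x; rewrite !nth_cat sz_u sz_z; simpl_ifs_lia.
by rewrite eq_z ?nth_cat ?sz_u; simpl_ifs_lia; [congr nth; lia | lia].
Qed.

Section Concatenation.
Variables (w : seq letter) (bs : seq (seq letter)).
Hypothesis w_sf : squarefree w.
Hypothesis size_bs : size bs = size w.
Hypothesis bs_B : forall j, j < size w -> B (nth ord0 w j) (nth [::] bs j).
Arguments bs_B {j}.

Local Notation m := (size w).
Local Notation U := (flatten bs).

Lemma all_size_bs : all (fun b => size b == n) bs.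
Proof.
apply/(all_nthP [::]) => j; rewrite size_bs => lt_j.
by rewrite (size_B (bs_B lt_j)).
Qed.

Lemma size_concat : size U = m * n.
Proof. by rewrite (size_flatten_uniform all_size_bs) size_bs. Qed.

Lemma nth_concat t x : x < n -> nth ord0 U (t * n + x) = nth ord0 (nth [::] bs t) x.
Proof. by move=> lt_x; rewrite nth_flatten_uniform ?all_size_bs. Qed.

Lemma nth_concat2 t y : t < m -> y < n + n ->
  nth ord0 U (t * n + y) = nth ord0 (nth [::] bs t ++ nth [::] bs t.+1) y.
Proof.
move=> lt_t lt_y; rewrite nth_cat (size_B (bs_B lt_t)).
have [lt_yn|le_ny] := ltnP; first by rewrite nth_concat.
by rewrite -nth_concat ?mulSn; [congr nth; lia | lia].
Qed.

Lemma neighbours_neq {j} : j.+1 < m -> nth ord0 w j != nth ord0 w j.+1.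
Proof.
move=> lt_j1; apply/eqP => e; move/squarefreeP: w_sf => /(_ j 1); apply.
by split=> // [|[|//]]; [lia | rewrite !addn0 addn1].
Qed.

Lemma letter_of_block t t' : t < m -> t' < m ->
  (forall x, x < n -> nth ord0 (nth [::] bs t) x = nth ord0 (nth [::] bs t') x) ->
  nth ord0 w t = nth ord0 w t'.
Proof.
move=> lt_t lt_t' eq_tt'; apply: (B_disjoint (bs_B lt_t)).
suff -> : nth [::] bs t = nth [::] bs t' by exact: bs_B.
apply: (@eq_from_nth _ ord0) => [|x]; first by rewrite !(size_B (bs_B _)).
by rewrite (size_B (bs_B lt_t)); exact: eq_tt'.
Qed.

(* Near the end of [w] the window of three blocks is completed by arbitrary code
   words; the square lies inside the genuine part of the window anyway. *)
Lemma no_square_in_window j r L : j < m -> r + L + L <= n + n + n ->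
  ~ square_at U (j * n + r) L.
Proof.
move=> lt_j short [L_gt0 Lle eqL]; rewrite size_concat in Lle.
have [c1 [g1 [neq01 Bg1 def_g1]]] : exists c1 g1, [/\ nth ord0 w j != c1, B c1 g1 &
    j.+1 < m -> c1 = nth ord0 w j.+1 /\ g1 = nth [::] bs j.+1].
  have [lt_j1|le_mj1] := ltnP j.+1 m.
    by exists (nth ord0 w j.+1), (nth [::] bs j.+1); split; [exact: neighbours_neq | exact: bs_B |].
  have [c1 [g1 [neq Bg1]]] := B_other (nth ord0 w j).
  by exists c1, g1; split=> //; rewrite ltnNge le_mj1.
have [c2 [g2 [neq12 Bg2 def_g2]]] : exists c2 g2, [/\ c1 != c2, B c2 g2 &
    j.+2 < m -> g2 = nth [::] bs j.+2].
  have [lt_j2|le_mj2] := ltnP j.+2 m.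
    have [-> _] := def_g1 (ltnW lt_j2).
    by exists (nth ord0 w j.+2), (nth [::] bs j.+2); split; [exact: neighbours_neq | exact: bs_B |].
  have [c2 [g2 [neq Bg2]]] := B_other c1.
  by exists c2, g2; split=> //; rewrite ltnNge le_mj2.
have window y : y < n + n + n -> j * n + y < m * n ->
    nth ord0 U (j * n + y) = nth ord0 (nth [::] bs j ++ g1 ++ g2) y.
  move=> lt_y lt_jy; rewrite !nth_cat (size_B (bs_B lt_j)) (size_B Bg1).
  have [lt_yn|le_ny] := ltnP y n; first by rewrite nth_concat.
  have lt_j1 : j.+1 < m by nia.
  have [_ ->] := def_g1 lt_j1.
  have [lt_y2n|le_2ny] := ltnP (y - n) n.
    by rewrite -nth_concat // mulSn; congr nth; lia.
  have lt_j2 : j.+2 < m by nia.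
  by rewrite def_g2 // -nth_concat; [congr nth; rewrite !mulSn; lia | lia].
move: (B_triple neq01 neq12 (bs_B lt_j) Bg1 Bg2) => /squarefreeP/(_ r L); apply.
split=> //; first by rewrite !size_cat (size_B (bs_B lt_j)) (size_B Bg1) (size_B Bg2); lia.
move=> i lt_i; rewrite -window; [|lia|lia]; rewrite -window; [|lia|lia].
by rewrite !addnA; exact: eqL.
Qed.

Lemma no_unaligned_block t d : t < m -> d + n <= m * n -> d %% n != 0 ->
  (forall x, x < n -> nth ord0 (nth [::] bs t) x = nth ord0 U (d + x)) -> False.
Proof.
move=> lt_t le_dn mod_d eq_t; move: le_dn eq_t; rewrite (divn_eq d n) => le_dn eq_t.
have lt_p := ltn_pmod d n_gt0.
have lt_t'1 : (d %/ n).+1 < m by nia.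
apply: (B_unaligned (d %% n) (neighbours_neq lt_t'1) (bs_B (ltnW lt_t'1))
  (bs_B lt_t'1) (bs_B lt_t)); first by rewrite lt0n mod_d.
by move=> x lt_x; rewrite eq_t // -addnA nth_concat2 //; [lia | lia].
Qed.

Lemma aligned_square_shift {j r q} t : square_at U (j * n + r) (q * n) ->
  j * n + r <= t * n -> t * n + n <= j * n + r + q * n ->
  nth ord0 w t = nth ord0 w (t + q).
Proof.
move=> [_ Lle eqL] le1 le2; rewrite size_concat in Lle.
apply: letter_of_block; [nia | nia |] => x lt_x.
rewrite -!nth_concat // mulnDl.
have -> : t * n + x = j * n + r + (t * n + x - (j * n + r)) by lia.
by rewrite eqL; [congr nth; lia | lia].
Qed.

(* If the square is aligned with the blocks, it is the image of a square of [w].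
   Otherwise block [j + q] is the tail of block [j] followed by the head of block
   [j + 2q], so these three blocks contain a square of length [n]. *)
Lemma no_aligned_square j r q : j < m -> r < n -> ~ square_at U (j * n + r) (q * n).
Proof.
move=> lt_j lt_r sq; have shift t := aligned_square_shift t sq.
have [qn_gt0 Lle eqL] := sq; rewrite size_concat in Lle.
have q_gt0 : 0 < q by move: qn_gt0; rewrite muln_gt0 => /andP[].
have neq_jq : nth ord0 w j != nth ord0 w (j + q).
  apply/eqP => e; move/squarefreeP: w_sf => /(_ j q); apply; split=> //; first by nia.
  move=> [|i] lt_i; first by rewrite !addn0.
  by rewrite shift; [congr nth; lia | nia | nia].
have r_gt0 : 0 < r.
  rewrite lt0n; apply/eqP => r0; move/eqP: neq_jq; apply; apply: shift; rewrite r0; nia.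
have lt_j2q : j + q + q < m by nia.
have neq_q2q : nth ord0 w (j + q) != nth ord0 w (j + q + q).
  apply/eqP => e; move/squarefreeP: w_sf => /(_ j.+1 q); apply; split=> //.
  move=> i lt_i; have [lt_i1|le_qi1] := ltnP i.+1 q.
    by rewrite shift; [congr nth; lia | nia | nia].
  have -> : j.+1 + i = j + q by lia.
  by have -> : j.+1 + q + i = j + q + q by lia.
have lt_jq : j + q < m by lia.
move: (B_triple neq_jq neq_q2q (bs_B lt_j) (bs_B lt_jq) (bs_B lt_j2q)).
move=> /squarefreeP/(_ r n); apply.
have sz_j := size_B (bs_B lt_j); have sz_jq := size_B (bs_B lt_jq).
split=> //; first by rewrite !size_cat sz_j sz_jq (size_B (bs_B lt_j2q)); lia.
move=> i lt_i; rewrite !nth_cat sz_j sz_jq.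
have [lt_ri|le_nri] := ltnP (r + i) n; simpl_ifs_lia.
  rewrite -nth_concat // -nth_concat; last by lia.
  have -> : (j + q) * n + (r + n + i - n) = j * n + r + q * n + i by rewrite mulnDl; lia.
  by rewrite -eqL ?addnA //; nia.
rewrite -nth_concat; last by lia.
rewrite -nth_concat; last by lia.
have -> : (j + q) * n + (r + i - n) = j * n + r + (q * n - n + i) by rewrite mulnDl; nia.
have -> : (j + q + q) * n + (r + n + i - n - n) = j * n + r + q * n + (q * n - n + i).
  by rewrite !mulnDl; nia.
by rewrite eqL //; nia.
Qed.

(* One half of such a square contains a whole block, whose copy in the other half
   is not aligned with the block structure. *)
Lemma no_long_unaligned_square j r L : j < m -> r < n -> n + n + n < r + L + L ->
  L %% n != 0 -> ~ square_at U (j * n + r) L.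
Proof.
move=> lt_j lt_r long mod_L [L_gt0 Lle eqL]; rewrite size_concat in Lle.
have [le_2n|lt_2n] := leqP (n + n) (r + L).
  apply: (@no_unaligned_block j.+1 (j.+1 * n + L)); [nia | nia | by rewrite modnMDl |].
  move=> x lt_x; rewrite -nth_concat //.
  have -> : j.+1 * n + x = j * n + r + (n - r + x) by rewrite mulSn; lia.
  by rewrite eqL; [congr nth; rewrite mulSn; lia | lia].
apply: (@no_unaligned_block j.+2 (j.+2 * n - L)); [nia | nia | |].
  apply: contra mod_L => /eqP mod_d.
  have : (j.+2 * n - L + L) %% n = 0 by rewrite subnK ?modnMl //; nia.
  by rewrite -modnDml mod_d add0n => ->.
move=> x lt_x; rewrite -nth_concat //.
have -> : j.+2 * n + x = j * n + r + L + (j.+2 * n + x - (j * n + r + L)).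
  by rewrite !mulSn; lia.
by rewrite -eqL; [congr nth; rewrite !mulSn; lia | rewrite !mulSn; lia].
Qed.

Theorem squarefree_concat : squarefree U.
Proof.
apply/squarefreeP => st L sq_st; have [L_gt0 Lle _] := sq_st.
rewrite size_concat in Lle; move: sq_st; rewrite (divn_eq st n) => sq_st.
have lt_j : st %/ n < m by rewrite ltn_divLR //; lia.
have lt_r := ltn_pmod st n_gt0.
have [short|long] := leqP (st %% n + L + L) (n + n + n).
  exact: no_square_in_window lt_j short sq_st.
have [mod_L|mod_L] := eqVneq (L %% n) 0.
  by move: sq_st; rewrite (divn_eq L n) mod_L addn0; exact: no_aligned_square.
exact: no_long_unaligned_square lt_j lt_r long mod_L sq_st.
Qed.

End Concatenation.
End BrinkhuisCode.

Lemma min3_le (k : letter -> nat) i : minn (k ord0) (minn (k (inord 1)) (k (inord 2))) <= k i.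
Proof.
case: i => [[|[|[|//]]] lt_i].
- by rewrite (_ : Ordinal lt_i = ord0) ?geq_minl //; exact: val_inj.
- by rewrite (_ : Ordinal lt_i = inord 1); [lia | apply: val_inj; rewrite /= inordK].
- by rewrite (_ : Ordinal lt_i = inord 2); [lia | apply: val_inj; rewrite /= inordK].
Qed.

Lemma brinkhuis_triple_length0 (k : letter -> nat) (B : letter -> {set 0.-tuple letter}) :
  brinkhuis_triple k B -> forall i, k i <= 1.
Proof. by move=> [_ [card_B _]] i; rewrite -card_B (leq_trans (max_card _)) // card_tuple. Qed.

Section Counting.
Variables (n : nat) (k : letter -> nat) (B : letter -> {set n.-tuple letter}).
Hypothesis n_gt0 : 0 < n.
Hypothesis B_brinkhuis : brinkhuis_triple k B.
Variable K : nat.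
Hypothesis K_gt0 : 0 < K.
Hypothesis K_le_k : forall i, K <= k i.

Let inB i (u : seq letter) := exists2 t, t \in B i & u = tval t.

Let size_inB i u : inB i u -> size u = n.
Proof. by case=> t _ ->; rewrite size_tuple. Qed.

Let inB_nonempty i : exists u, inB i u.
Proof.
have [_ [card_B _]] := B_brinkhuis.
have /card_gt0P[t Bt] : 0 < #|B i| by rewrite card_B; exact: leq_trans (K_le_k i).
by exists (tval t), t.
Qed.

Let inB_triple i i' i'' u v w : i != i' -> i' != i'' ->
  inB i u -> inB i' v -> inB i'' w -> squarefree (u ++ v ++ w).
Proof.
move=> neq_ii' neq_i'i'' [tu Bu ->] [tv Bv ->] [tw Bw ->].
by have [_ [_ triple]] := B_brinkhuis; exact: (triple _ _ _ (squarefree3 _ _ _ neq_ii' neq_i'i'') _ _ _ Bu Bv Bw).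
Qed.

Let code (i : letter) (c : 'I_K) : n.-tuple letter := nth (nseq_tuple n ord0) (enum (B i)) c.

Let lt_code i (c : 'I_K) : c < size (enum (B i)).
Proof.
have [_ [card_B _]] := B_brinkhuis.
by rewrite -cardE card_B; exact: leq_trans (ltn_ord c) (K_le_k i).
Qed.

Let code_in i c : inB i (code i c).
Proof. by exists (code i c); rewrite // -mem_enum mem_nth. Qed.

Let code_inj i i' c c' : code i c = code i' c' -> i = i' /\ c = c'.
Proof.
move=> eq_code; have eq_ii' : i = i'.
  apply: (B_disjoint _ n_gt0 _ size_inB inB_triple (code_in i c)).
  by rewrite eq_code; exact: code_in.
split=> //; subst i'; apply/val_inj/eqP.
by rewrite -(nth_uniq (nseq_tuple n ord0) (lt_code i c) (lt_code i c')) ?enum_uniq //; exact/eqP.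
Qed.

Lemma card_brinkhuis_concat m : a m * expn K m <= a (m * n).
Proof.
pose D := ({w : m.-tuple letter | w \in A m} * m.-tuple 'I_K)%type.
pose blocks (p : D) := [tuple code (tnth (val p.1) j) (tnth p.2 j) | j < m].
pose G (p : D) : (m * n).-tuple letter :=
  insubd (nseq_tuple (m * n) ord0) (flatten (map val (blocks p))).
have all_size p : all (fun b => size b == n) (map val (blocks p)).
  by apply/allP => _ /mapP[b _ ->]; rewrite size_tuple.
have GE p : val (G p) = flatten (map val (blocks p)).
  rewrite insubdK // -topredE /= (size_flatten_uniform (all_size p)).
  by rewrite size_map size_tuple.
have G_in p : G p \in A (m * n).
  rewrite inE; apply/asboolP; rewrite GE.
  apply: (squarefree_concat _ n_gt0 _ size_inB inB_nonempty inB_triple (val (sval p.1))).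
  - by have := svalP p.1; rewrite inE => /asboolP.
  - by rewrite size_map !size_tuple.
  move=> j; rewrite size_tuple => lt_j.
  rewrite (nth_map (nseq_tuple n ord0)) ?size_tuple //.
  rewrite (_ : j = Ordinal lt_j) // nth_mktuple -tnth_nth; exact: code_in.
have G_inj : injective G.
  move=> [[w1 Aw1] c1] [[w2 Aw2] c2] /(congr1 val); rewrite !GE => eq_flat.
  have /(inj_map val_inj)/val_inj eq_blocks : map val (blocks (exist _ w1 Aw1, c1)) =
      map val (blocks (exist _ w2 Aw2, c2)).
    have shapeE p : shape (map val (blocks p)) = nseq m n.
      have /all_pred1P -> : all (pred1 n) (shape (map val (blocks p))).
        by rewrite all_map; exact: all_size.
      by rewrite /shape size_map size_tuple.
    by rewrite -[LHS]flattenK -[RHS]flattenK !shapeE eq_flat.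
  have eq_j (j : 'I_m) : tnth w1 j = tnth w2 j /\ tnth c1 j = tnth c2 j.
    by apply: code_inj; move: (congr1 (fun t => tnth t j) eq_blocks); rewrite !tnth_mktuple.
  have eq_w : w1 = w2 by apply: eq_from_tnth => j; have [] := eq_j j.
  have eq_c : c1 = c2 by apply: eq_from_tnth => j; have [] := eq_j j.
  by subst w2 c2; congr (_, _); apply: val_inj.
have : #|[set G p | p : D]| <= #|A (m * n)|.
  by apply: subset_leq_card; apply/subsetP => _ /imsetP[p _ ->].
rewrite card_imset // card_prod card_sig card_tuple card_ord.
by have -> : #|[pred x in A m]| = a m by apply: eq_card.
Qed.

End Counting.

Local Open Scope R_scope.

Lemma Rpower_pow_inv {x : R} {p : nat} : 0 < x -> (0 < p)%nat -> Rpower (x ^ p) (/ INR p) = x.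
Proof.
move=> x_gt0 p_gt0; have p_pos : 0 < INR p by apply: lt_0_INR; lia.
by rewrite -Rpower_pow // Rpower_mult Rinv_r ?Rpower_1 //; lra.
Qed.

Lemma Rpower_inv_le (K s : R) (p : nat) : 0 < K -> 0 < s -> (0 < p)%nat ->
  K <= s ^ p -> Rpower K (/ INR p) <= s.
Proof.
move=> K_gt0 s_gt0 p_gt0 le_Ks; rewrite -{1}(Rpower_pow_inv s_gt0 p_gt0).
apply: Rle_Rpower_l => //.
by left; apply: Rinv_0_lt_compat; apply: lt_0_INR; lia.
Qed.

Lemma Rpower_root_mul_le (x y K : R) (M p : nat) : 0 < x -> 0 < K -> (0 < M)%nat -> (0 < p)%nat ->
  x * K ^ M <= y -> Rpower x (/ INR M) * K <= Rpower y (/ INR (M * p)) ^ p.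
Proof.
move=> x_gt0 K_gt0 M_gt0 p_gt0 le_xy.
have M_pos : 0 < INR M by apply: lt_0_INR; lia.
have p_pos : 0 < INR p by apply: lt_0_INR; lia.
have xK_gt0 : 0 < x * K ^ M by apply: Rmult_lt_0_compat => //; exact: pow_lt.
rewrite -Rpower_pow ?Rpower_mult; last by apply: exp_pos.
have -> : / INR (M * p) * INR p = / INR M by rewrite -multE mult_INR; field; lra.
rewrite -{1}(Rpower_pow_inv K_gt0 M_gt0) Rpower_mult_distr //; last exact: pow_lt.
apply: Rle_Rpower_l; last lra.
by left; apply: Rinv_0_lt_compat.
Qed.

Lemma is_lim_seq_pow {u : nat -> R} {l : R} (p : nat) :
  is_lim_seq u l -> is_lim_seq (fun j => u j ^ p) (l ^ p).
Proof.
move=> lim_u; elim: p => [|p IH]; first exact: is_lim_seq_const.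
exact: (is_lim_seq_mult' _ _ _ _ lim_u IH).
Qed.

Lemma INR_expn (p q : nat) : INR (expn p q) = INR p ^ q.
Proof. by elim: q => [|q IH]; rewrite ?expn0 // expnS -multE mult_INR IH. Qed.

Lemma ln_INR_ge0 (p : nat) : 0 <= ln (INR p).
Proof.
case: p => [|p].
  by rewrite /ln; case: Rlt_dec => [h|_]; [exfalso; move: h; rewrite INR_0 => h; lra | lra].
by rewrite -ln_1; apply: ln_le; rewrite ?S_INR; have := pos_INR p; lra.
Qed.

Lemma Rpower_nat_inv_ge1 (p m : nat) : 1 <= Rpower (INR p) (/ INR m).
Proof.
rewrite /Rpower; apply: Rle_trans (exp_ineq1_le _); suff : 0 <= / INR m * ln (INR p) by lra.
apply: Rmult_le_pos (ln_INR_ge0 p); case: m => [|m]; first by rewrite Rinv_0; lra.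
by left; apply: Rinv_0_lt_compat; apply: lt_0_INR; lia.
Qed.

Lemma a1_gt0 : (0 < a 1)%nat.
Proof.
apply/card_gt0P; exists [tuple ord0]; rewrite inE; apply/asboolP/squarefreeP.
by move=> st L [L_gt0 Lle _]; move: Lle; rewrite size_tuple; lia.
Qed.

Lemma brinkhuis_growth_bound {n : nat} {k : letter -> nat}
    {B : letter -> {set n.-tuple letter}} {K : nat} {s : R} :
  (1 < n)%nat -> brinkhuis_triple k B ->
  (0 < K)%nat -> (forall i, K <= k i)%nat ->
  is_lim_seq (fun m => Rpower (INR (a m)) (/ INR m)) s -> s * INR K <= s ^ n.
Proof.
move=> n_gt1 HB K_gt0 K_le lim_s; have n_gt0 : (0 < n)%nat by lia.
pose b m := Rpower (INR (a m)) (/ INR m).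
have count m := card_brinkhuis_concat _ _ _ n_gt0 HB _ K_gt0 K_le m.
have a_gt0 j : (0 < a (expn n j))%nat.
  elim: j => [|j IH]; first exact: a1_gt0.
  by rewrite expnSr; apply: leq_trans (count _); rewrite muln_gt0 IH expn_gt0 K_gt0.
have step j : b (expn n j) * INR K <= b (expn n j.+1) ^ n.
  rewrite /b expnSr; apply: Rpower_root_mul_le; rewrite ?expn_gt0 ?n_gt0 //.
  - by apply: lt_0_INR; apply/ltP.
  - by apply: lt_0_INR; apply/ltP.
  by rewrite -INR_expn -mult_INR multE; apply: le_INR; apply/leP.
have lim_subseq (phi : nat -> nat) : (forall j, phi j < phi j.+1)%nat ->
    is_lim_seq (fun j => b (phi j)) s.
  move=> incr_phi; apply: (is_lim_seq_subseq b s phi) => //.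
  by apply: eventually_subseq => j; apply/ltP.
have lim_b : is_lim_seq (fun j => b (expn n j)) s.
  by apply: lim_subseq => j; rewrite ltn_exp2l.
have lim_b1 : is_lim_seq (fun j => b (expn n j.+1)) s.
  by apply: lim_subseq => j; rewrite ltn_exp2l.
by have := is_lim_seq_le _ _ (Finite (s * INR K)) (Finite (s ^ n)) step
  (is_lim_seq_mult' _ _ _ _ lim_b (is_lim_seq_const _)) (is_lim_seq_pow n lim_b1).
Qed.

Theorem lemma2 (n : nat) (k : 'I_3 -> nat) (B : 'I_3 -> {set n.-tuple 'I_3}) :
  (forall i, is_true (leq 1 (k i))) ->
  brinkhuis_triple k B ->
  forall s : R,
    is_lim_seq (fun m : nat => Rpower (INR (a m)) (/ INR m)) s ->
    (Rpower (INR (minn (k ord0) (minn (k (inord 1)) (k (inord 2)))))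
            (/ (INR n - 1)) <= s)%R.
Proof.
move=> k_gt0 HB s lim_s.
set K := minn _ _.
have K_le i : (K <= k i)%nat by apply: min3_le.
have K_gt0 : (0 < K)%nat by rewrite /K !leq_min !k_gt0.
have K_pos : 0 < INR K by apply: lt_0_INR; apply/ltP.
have s_ge1 : 1 <= s.
  apply: (is_lim_seq_le (fun _ => 1) _ 1 s _ (is_lim_seq_const 1) lim_s) => m.
  exact: Rpower_nat_inv_ge1.
have [n_le1|n_gt1] := leqP n 1.
  suff -> : Rpower (INR K) (/ (INR n - 1)) = 1 by [].
  have [n0|n1] : n = 0%nat \/ n = 1%nat by lia.
    subst n; have k0_le1 := brinkhuis_triple_length0 _ _ HB ord0.
    have -> : K = 1%nat by have := K_le ord0; lia.
    by rewrite /Rpower ln_1 Rmult_0_r exp_0.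
  by rewrite n1 (_ : INR 1 - 1 = 0) ?Rinv_0 ?Rpower_O //=; lra.
have n1E : INR n - 1 = INR (n - 1) by rewrite minus_INR ?INR_1 //; apply/leP; lia.
rewrite n1E; apply: Rpower_inv_le; rewrite ?subn_gt0 //; first lra.
apply: (Rmult_le_reg_l s); first lra.
rewrite -[X in _ <= X]/(s ^ (n - 1).+1) subn1 prednK; last lia.
exact: brinkhuis_growth_bound n_gt1 HB K_gt0 K_le lim_s.
Qed.
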